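(* Let $n\geqslant 1$ and $0\leqslant d\leqslant n-1$ be integers. Then the following two identities of rational functions in $q$ hold: \begin{align*} &\sum_{k=0}^{n-1}q^k\begin{bmatrix}2k\\ k+d\end{bmatrix}(-q^{k+1};q)_{n-1-k}\\ &\quad=\sum_{\substack{k=0\\ k\equiv n-d \pmod 2}}^{n-d}(-1)^{(n-d-k)/2}q^{3(n^2+k^2-d^2)/4-3nk/2+n-k}\frac{(1-q^k)(1+q^{n-k+1})}{(1-q^{2n-k+1})(1+q^n)}\begin{bmatrix}2n\\ k\end{bmatrix}, \end{align*} and \begin{align*} &\sum_{k=0}^{n-1}q^k\begin{bmatrix}2k\\ k+d\end{bmatrix}(-q^{k+1};q)_{n-1-k}^2 =\sum_{k=d+1}^{n}\sum_{j=k+1}^{n+1}q^{(j^2-3j+k^2-k)/2-d^2+1}\,\frac{1+q^{j-1}}{1+q^n}\begin{bmatrix}2n\\ n-j+1\end{bmatrix}. \end{align*}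
   Context: Here $q$ is an indeterminate. For $n\geq 1$, $(x;q)_n=(1-x)(1-xq)\cdots(1-xq^{n-1})$ and $(x;q)_0=1$. The $q$-binomial coefficient is $\begin{bmatrix}n\\ k\end{bmatrix}=\frac{(q;q)_n}{(q;q)_k(q;q)_{n-k}}$ if $0\leqslant k\leqslant n$ and $0$ otherwise. *)

From HB Require Import structures.
From mathcomp Require Import all_boot all_order all_algebra.
From mathcomp Require Import fraction.
Set Implicit Arguments. Unset Strict Implicit. Unset Printing Implicit Defensive.
Import Order.TTheory GRing.Theory Num.Theory.
Local Open Scope ring_scope.

Definition qpoch (K : comNzRingType) (x q : K) (n : nat) : K :=
  \prod_(i < n) (1 - x * q ^+ i).

Definition qbinom (K : fieldType) (q : K) (n k : nat) : K :=
  if (k <= n)%N then qpoch q q n / (qpoch q q k * qpoch q q (n - k)) else 0.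

Definition ratfun := {fraction {poly rat}}.
Definition qX : ratfun := FracField.tofrac 'X.

(* Let S_e(n) be the left-hand side
   with the e-th power of (-q^(k+1);q)_(n-1-k); splitting off its last term gives
   S_e(n+1) = (1 + q^n)^e S_e(n) + q^n [2n, n+d].  After multiplication by 1 + q^n,
   resp. q^(d^2) (1 + q^n), the right-hand sides become sums of the coefficients
   [2n, n+u], and the contiguous relation expressing q^u (1 + q^(u+1)) [2n+2, n+u+2]
   through [2n, n+u], [2n, n+u+1] and [2n, n+u+2] shows that they obey the same
   recurrence: the surplus terms telescope. *)

From HB Require Import structures.
From mathcomp Require Import all_boot all_order all_algebra.
From mathcomp Require Import fraction.
From mathcomp Require Import ring zify.
Set Implicit Arguments. Unset Strict Implicit. Unset Printing Implicit Defensive.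
Import Order.TTheory GRing.Theory Num.Theory.
Local Open Scope ring_scope.

Lemma bin2S k : 'C(k.+1, 2) = ('C(k, 2) + k)%N.
Proof. by rewrite binS bin1. Qed.

Section QPochhammer.
Variables (K : comNzRingType) (x q : K).

Lemma qpoch0 : qpoch x q 0 = 1.
Proof. by rewrite /qpoch big_ord0. Qed.

Lemma qpochS n : qpoch x q n.+1 = qpoch x q n * (1 - x * q ^+ n).
Proof. by rewrite /qpoch big_ord_recr. Qed.

End QPochhammer.

Lemma sumr_telescope_down {V : zmodType} n m (f : nat -> V) : (n <= m)%N ->
  \sum_(n <= k < m) (f k - f k.+1) = f n - f m.
Proof.
move=> le_nm; rewrite -(opprB (f m)) -telescope_sumr // -sumrN.
by apply: eq_bigr => k _; rewrite opprB.
Qed.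

Lemma sum_nat_parity {V : nmodType} m (F : nat -> V) :
  \sum_(0 <= k < m.+1 | k == m %[mod 2]) F k = \sum_(0 <= i < m./2.+1) F (m - i.*2)%N.
Proof.
elim/ltn_ind: m F => -[|[|m]] IH F.
- by rewrite big_mkcond !big_nat1.
- by rewrite big_mkcond big_nat_recr //= !big_nat1 add0r.
- rewrite big_mkcond big_nat_recr // big_nat_recr // -big_mkcond [LHS]/= eqxx.
  rewrite (_ : (m.+1 == m.+2 %[mod 2]) = false) ?addr0; last by apply/negbTE; lia.
  rewrite (eq_bigl (fun k => k == m %[mod 2])) => [|k]; last by rewrite -(addn2 m) modnDr.
  by rewrite IH // [RHS]big_nat_recl // addrC.
Qed.

Section QBinomial.
Variables (K : fieldType) (q : K).
Hypothesis nz_1subq : forall i, 1 - q ^+ i.+1 != 0.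
Hypothesis nz_1addq : forall i, 1 + q ^+ i != 0.
Local Notation qb := (qbinom q).

Lemma qfactS n : qpoch q q n.+1 = qpoch q q n * (1 - q ^+ n.+1).
Proof. by rewrite qpochS exprS. Qed.

Lemma qfact_neq0 n : qpoch q q n != 0.
Proof.
elim: n => [|n IH]; first by rewrite qpoch0 oner_eq0.
by rewrite qfactS mulf_neq0.
Qed.

Lemma qbinom_gt N k : (N < k)%N -> qb N k = 0.
Proof. by move=> lt_Nk; rewrite /qbinom leqNgt lt_Nk. Qed.

Lemma qbinomE N k : (k <= N)%N ->
  qb N k = qpoch q q N / (qpoch q q k * qpoch q q (N - k)).
Proof. by rewrite /qbinom => ->. Qed.

Lemma qbinomnn N : qb N N = 1.
Proof. by rewrite qbinomE // subnn qpoch0 mulr1 divff ?qfact_neq0. Qed.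

Lemma qbinom_sym N k : (k <= N)%N -> qb N k = qb N (N - k).
Proof.
by move=> le_kN; rewrite !qbinomE ?leq_subr // subKn // [_ * qpoch _ _ _]mulrC.
Qed.

Lemma qbinom_ratio N k : (1 - q ^+ k.+1) * qb N k.+1 = (1 - q ^+ (N - k)) * qb N k.
Proof.
have [lt_kN|le_Nk] := ltnP k N; last first.
  by rewrite qbinom_gt ?ltnS // (eqnP le_Nk) expr0 subrr !mul0r mulr0.
rewrite qbinomE // qbinomE ?(ltnW lt_kN) // -(subnSK lt_kN) !qfactS.
by field; rewrite !qfact_neq0 !nz_1subq.
Qed.

Lemma qbinomS N k : qb N.+1 k.+1 = qb N k + q ^+ k.+1 * qb N k.+1.
Proof.
have [lt_kN|lt_Nk|<-] := ltngtP k N; last first.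
- by rewrite !qbinomnn qbinom_gt // mulr0 addr0.
- by rewrite !qbinom_gt ?mulr0 ?addr0 //; lia.
rewrite !qbinomE ?subSS ?ltnS ?(ltnW lt_kN) // -(subnSK lt_kN) !qfactS.
have -> : q ^+ N.+1 = q ^+ k.+1 * q ^+ (N - k.+1).+1.
  by rewrite -exprD subnSK // addSn subnKC // ltnW.
by field; rewrite !qfact_neq0 !nz_1subq.
Qed.

Lemma qbinom_ratio_rev N k :
  (1 - q ^+ k) * qb N k = (1 - q ^+ (N.+1 - k)) * qb N (N.+1 - k).
Proof.
case: k => [|k]; first by rewrite expr0 subrr mul0r subn0 qbinom_gt // mulr0.
have [le_kN|lt_Nk] := leqP k N; last first.
  by rewrite subSS (eqnP (ltnW lt_Nk)) expr0 subrr mul0r qbinom_gt ?mulr0 //; lia.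
by rewrite qbinom_ratio subSS -qbinom_sym.
Qed.

Lemma qbinom_central_step n u :
  q ^+ u * (1 + q ^+ u.+1) * qb (2 * n).+2 (n + u).+2 =
  (1 + q ^+ n.+1) * (q ^+ u * (1 + q ^+ u.+1) * qb (2 * n) (n + u).+1
     + q ^+ n * (qb (2 * n) (n + u) + q ^+ (3 * u + 3) * qb (2 * n) (n + u).+2)).
Proof.
rewrite !qbinomS.
have [lt_un|lt_nu|<-] := ltngtP u n.
- (* With n = u + m + 1, x = q^u and y = q^m, every power below is a monomial in
     x, y and q, and the two ratio relations eliminate A and C. *)
  have [m ->] : exists m, n = (u + m).+1 by exists (n - u.+1)%N; lia.
  have rA := qbinom_ratio (2 * (u + m).+1) ((u + m).+1 + u).
  have rC := qbinom_ratio (2 * (u + m).+1) ((u + m).+1 + u).+1.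
  rewrite (_ : (2 * _ - _ = m.+1)%N) in rA; last by lia.
  rewrite (_ : (2 * _ - _ = m)%N) in rC; last by lia.
  have nzA := nz_1subq m; have nzC := nz_1subq ((u + m).+1 + u).+1.
  set A := qb _ (_ + u) in rA *; set B := qb _ (_ + u).+1 in rA rC *.
  set C := qb _ (_ + u).+2 in rC *.
  move: rA rC nzA nzC; rewrite [(3 * u)%N]mulnC.
  rewrite !(addSn, addnS, exprS, exprD, expr0, exprM).
  move=> rA rC nzA nzC.
  rewrite -(mulKf nzA A) -rA -(mulKf nzC C) rC.
  by field; rewrite nzA nzC.
- by rewrite !qbinom_gt ?(mulr0, add0r) //; lia.
- rewrite addnn -mul2n qbinomnn !qbinom_gt; [ring | lia..].
Qed.

Definition tri_gap n t := q ^+ n *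
  (q ^+ 'C(t, 2) * qb (2 * n) (n + t) - q ^+ 'C(t.+2, 2) * qb (2 * n) (n + t).+1).

Lemma qbinom_central_step_tri n t :
  q ^+ 'C(t.+1, 2) * (1 + q ^+ t.+1) * qb (2 * n).+2 (n + t).+2 =
  (1 + q ^+ n.+1) * ((1 + q ^+ n) *
     (q ^+ 'C(t.+1, 2) * (1 + q ^+ t.+1) * qb (2 * n) (n + t).+1)
     + (tri_gap n t - tri_gap n t.+1)).
Proof.
have E1 : q ^+ 'C(t.+1, 2) = q ^+ 'C(t, 2) * q ^+ t by rewrite bin2S exprD.
have E2 : q ^+ 'C(t.+2, 2) = q ^+ 'C(t, 2) * q ^+ t * q ^+ t.+1.
  by rewrite !bin2S -!exprD.
have E3 : q ^+ 'C(t.+3, 2) = q ^+ 'C(t, 2) * q ^+ (3 * t + 3).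
  by rewrite !bin2S -exprD; congr (_ ^+ _); lia.
transitivity (q ^+ 'C(t, 2) *
  (q ^+ t * (1 + q ^+ t.+1) * qb (2 * n).+2 (n + t).+2)); first by rewrite E1; ring.
by rewrite /tri_gap !addnS qbinom_central_step E2 E3 E1; ring.
Qed.

Definition qsum e d n := \sum_(0 <= k < n)
  q ^+ k * qb (2 * k) (k + d) * qpoch (- q ^+ k.+1) q (n - 1 - k) ^+ e.

Lemma qsumS e d n :
  qsum e d n.+1 = (1 + q ^+ n) ^+ e * qsum e d n + q ^+ n * qb (2 * n) (n + d).
Proof.
rewrite /qsum big_nat_recr //= subn1 /= subnn qpoch0 expr1n mulr1; congr (_ + _).
rewrite mulr_sumr; apply: eq_big_nat => k /andP[_ lt_kn].
have -> : (n - k = (n - 1 - k).+1)%N by lia.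
rewrite qpochS mulNr -exprD opprK exprMn (_ : (k.+1 + _ = n)%N); last by lia.
ring.
Qed.

Lemma qsum_small e d n : (n <= d)%N -> qsum e d n = 0.
Proof.
move=> le_nd; apply: big1_seq => k; rewrite mem_index_iota => /andP[_ lt_kn].
by rewrite qbinom_gt ?mulr0 ?mul0r //; lia.
Qed.

Definition alt_gap d n i :=
  (-1) ^+ i * q ^+ (3 * i * (d + i)) * qb (2 * n) (n + (d + 2 * i)).

Definition alt_term d n i := (-1) ^+ i * q ^+ (3 * i * (d + i)) *
  (q ^+ (d + 2 * i) * (1 + q ^+ (d + 2 * i).+1) * qb (2 * n) (n + (d + 2 * i)).+1).

Definition alt_sum d n := \sum_(0 <= i < n) alt_term d n i.

Lemma alt_termS d n i : alt_term d n.+1 i =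
  (1 + q ^+ n.+1) * (alt_term d n i + q ^+ n * (alt_gap d n i - alt_gap d n i.+1)).
Proof.
rewrite /alt_term /alt_gap addSn.
have -> : (2 * n.+1 = (2 * n).+2)%N by lia.
rewrite qbinom_central_step.
have -> : (n + (d + 2 * i.+1) = (n + (d + 2 * i)).+2)%N by lia.
have -> : (3 * i.+1 * (d + i.+1) = 3 * i * (d + i) + (3 * (d + 2 * i) + 3))%N by lia.
by rewrite [(-1) ^+ i.+1]exprS (exprD _ (3 * i * (d + i))); ring.
Qed.

Lemma alt_sumS d n :
  alt_sum d n.+1 = (1 + q ^+ n.+1) * (alt_sum d n + q ^+ n * qb (2 * n) (n + d)).
Proof.
rewrite /alt_sum (eq_bigr _ (fun i _ => alt_termS d n i)) -mulr_sumr big_split /=.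
rewrite -mulr_sumr sumr_telescope_down // big_nat_recr //=.
have -> : alt_term d n n = 0 by rewrite /alt_term qbinom_gt ?mulr0 //; lia.
have -> : alt_gap d n n.+1 = 0 by rewrite /alt_gap qbinom_gt ?mulr0 //; lia.
by rewrite /alt_gap muln0 addn0 !(mulr0, subr0, addr0, mul1r).
Qed.

Lemma qsum1_alt_sum d n : (1 + q ^+ n) * qsum 1 d n = alt_sum d n.
Proof.
elim: n => [|n IH]; first by rewrite /qsum /alt_sum !big_geq // mulr0.
by rewrite qsumS alt_sumS -IH expr1.
Qed.

Definition tail_sum n s := \sum_(s <= t < n)
  q ^+ 'C(t.+1, 2) * (1 + q ^+ t.+1) * qb (2 * n) (n + t).+1.

Definition double_sum d n := \sum_(d <= s < n) q ^+ 'C(s.+1, 2) * tail_sum n s.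

Lemma tail_sumS n s : (s <= n)%N ->
  tail_sum n.+1 s = (1 + q ^+ n.+1) * ((1 + q ^+ n) * tail_sum n s + tri_gap n s).
Proof.
move=> le_sn; rewrite /tail_sum.
have -> : (2 * n.+1 = (2 * n).+2)%N by lia.
under eq_bigr => t _ do rewrite addSn qbinom_central_step_tri.
rewrite -mulr_sumr big_split /= -mulr_sumr sumr_telescope_down ?leqW //.
rewrite big_nat_recr //= qbinom_gt ?mulr0 ?addr0; last by lia.
by rewrite [tri_gap n n.+1]/tri_gap !qbinom_gt ?(mulr0, subr0, addr0); try lia.
Qed.

Lemma tri_gap_weighted n s : q ^+ 'C(s.+1, 2) * tri_gap n s =
  q ^+ n * (q ^+ (s * s) * qb (2 * n) (n + s)
            - q ^+ (s.+1 * s.+1) * qb (2 * n) (n + s.+1)).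
Proof.
have sqE k : (k * k = 'C(k.+1, 2) + 'C(k, 2))%N.
  by elim: k => // k IH; rewrite !bin2S in IH *; lia.
by rewrite /tri_gap !sqE addnS !exprD; ring.
Qed.

Lemma double_sumS d n : (d <= n)%N -> double_sum d n.+1 =
  (1 + q ^+ n.+1) * ((1 + q ^+ n) * double_sum d n + q ^+ (n + d * d) * qb (2 * n) (n + d)).
Proof.
move=> le_dn; rewrite /double_sum.
have tailE s : (d <= s < n.+1)%N -> q ^+ 'C(s.+1, 2) * tail_sum n.+1 s =
    (1 + q ^+ n.+1) * ((1 + q ^+ n) * (q ^+ 'C(s.+1, 2) * tail_sum n s)
                      + q ^+ 'C(s.+1, 2) * tri_gap n s).
  by case/andP=> _ lt_sn; rewrite tail_sumS //; ring.
rewrite (eq_big_nat _ _ tailE) -mulr_sumr big_split /= -mulr_sumr.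
rewrite big_nat_recr //= [tail_sum n n]/tail_sum (big_geq (leqnn n)) mulr0 addr0.
rewrite (eq_bigr _ (fun s _ => tri_gap_weighted n s)) -mulr_sumr.
rewrite (sumr_telescope_down (fun s => q ^+ (s * s) * qb (2 * n) (n + s))) ?leqW //.
by rewrite [qb _ (n + n.+1)]qbinom_gt ?mulr0 ?subr0 ?exprD; [ring | lia].
Qed.

Lemma qsum2_double_sum d n : q ^+ (d * d) * ((1 + q ^+ n) * qsum 2 d n) = double_sum d n.
Proof.
elim: n => [|n IH]; first by rewrite /qsum /double_sum !big_geq // !mulr0.
have [le_dn|lt_nd] := leqP d n.
  by rewrite qsumS double_sumS // -IH exprD; ring.
by rewrite qsum_small // /double_sum big_geq // !mulr0.
Qed.

Lemma alt_term_closed d n i k : (k + d + 2 * i)%N = n ->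
  (-1) ^+ ((n - d - k) %/ 2)
  * q ^ (((3 * ((n%:Z) ^+ 2 + (k%:Z) ^+ 2 - (d%:Z) ^+ 2) - 6 * (n%:Z) * (k%:Z)) %/ 4)%Z
         + n%:Z - k%:Z)
  * ((1 - q ^+ k) * (1 + q ^+ (n - k + 1))) / ((1 - q ^+ (2 * n - k + 1)) * (1 + q ^+ n))
  * qb (2 * n) k
  = alt_term d n i / (1 + q ^+ n).
Proof.
move=> def_n.
have -> : ((n - d - k) %/ 2 = i)%N by lia.
have -> : (n - k + 1 = (d + 2 * i).+1)%N by lia.
have -> : (2 * n - k + 1 = (2 * n).+1 - k)%N by lia.
have -> : ((3 * ((n%:Z) ^+ 2 + (k%:Z) ^+ 2 - (d%:Z) ^+ 2) - 6 * (n%:Z) * (k%:Z)) %/ 4)%Z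
          + n%:Z - k%:Z = (3 * i * (d + i) + (d + 2 * i))%N%:Z.
  rewrite -def_n (_ : 3 * _ - _ = (3 * i * (d + i))%N%:Z * 4); last first.
    by rewrite !PoszM !PoszD; ring.
  by rewrite mulzK // !PoszD !PoszM; ring.
have nz_top := nz_1subq (n + (d + 2 * i)).
have ratio := qbinom_ratio_rev (2 * n) k.
rewrite (_ : ((2 * n).+1 - k = (n + (d + 2 * i)).+1)%N) in ratio *; last by lia.
rewrite -exprnP /alt_term exprD.
rewrite -[qb _ (n + _).+1](mulKf nz_top) -ratio.
by field; rewrite nz_top nz_1addq.
Qed.

Lemma alt_sum_closed d n : (d <= n)%N -> (0 < n)%N ->
  \sum_(0 <= k < (n - d).+1 | k == n - d %[mod 2])
     (-1) ^+ ((n - d - k) %/ 2)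
     * q ^ (((3 * ((n%:Z) ^+ 2 + (k%:Z) ^+ 2 - (d%:Z) ^+ 2)
               - 6 * (n%:Z) * (k%:Z)) %/ 4)%Z + n%:Z - k%:Z)
     * ((1 - q ^+ k) * (1 + q ^+ (n - k + 1)))
       / ((1 - q ^+ (2 * n - k + 1)) * (1 + q ^+ n))
     * qb (2 * n) k
  = alt_sum d n / (1 + q ^+ n).
Proof.
move=> le_dn n_gt0; rewrite sum_nat_parity /alt_sum mulr_suml.
rewrite [RHS](big_cat_nat (n := (n - d)./2.+1)) //=; last by lia.
rewrite [X in _ = _ + X]big1_seq ?addr0.
  by apply: eq_big_nat => i /andP[_ lt_i]; apply: alt_term_closed; lia.
move=> i /andP[_]; rewrite mem_index_iota => /andP[le_i _].
by rewrite /alt_term qbinom_gt ?mulr0 ?mul0r //; lia.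
Qed.

Lemma double_sum_closed (q_neq0 : q != 0) d n :
  \sum_(d.+1 <= k < n.+1) \sum_(k.+1 <= j < n.+2)
     q ^ (((((j%:Z) ^+ 2 - 3 * (j%:Z) + (k%:Z) ^+ 2 - k%:Z) %/ 2)%Z
             - (d%:Z) ^+ 2 + 1))
     * (1 + q ^+ (j - 1)) / (1 + q ^+ n)
     * qb (2 * n) (n.+1 - j)
  = double_sum d n / (q ^+ (d * d) * (1 + q ^+ n)).
Proof.
have bin2x2 k : ('C(k.+1, 2) * 2 = k * k.+1)%N.
  by elim: k => // k IH; rewrite bin2S; nia.
rewrite big_add1 /double_sum mulr_suml; apply: eq_big_nat => s /andP[_ lt_sn].
rewrite !big_add1 /tail_sum mulr_sumr mulr_suml; apply: eq_big_nat => t /andP[_ lt_tn].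
rewrite (_ : (t.+2 - 1 = t.+1)%N) // qbinom_sym; last by lia.
rewrite (_ : (2 * n - (n.+1 - t.+2) = (n + t).+1)%N); last by lia.
have -> : ((((t.+2%:Z) ^+ 2 - 3 * (t.+2%:Z) + (s.+1%:Z) ^+ 2 - s.+1%:Z) %/ 2)%Z
             - (d%:Z) ^+ 2 + 1) = ('C(t.+1, 2) + 'C(s.+1, 2))%N%:Z - (d * d)%N%:Z.
  have ht := bin2x2 t; have hs := bin2x2 s.
  have -> : (t.+2%:Z) ^+ 2 - 3 * (t.+2%:Z) + (s.+1%:Z) ^+ 2 - s.+1%:Z
            = (('C(t.+1, 2) + 'C(s.+1, 2))%N%:Z - 1) * 2 by rewrite !expr2; nia.
  by rewrite mulzK // expr2; lia.
rewrite expfzDr // -exprz_inv -!exprnP exprVn exprD.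
by field; rewrite nz_1addq expf_neq0.
Qed.

End QBinomial.

Lemma qX_neq0 : qX != 0.
Proof. by rewrite /qX tofrac_eq0 polyX_eq0. Qed.

Lemma qX_expE i : qX ^+ i = FracField.tofrac ('X^i : {poly rat}).
Proof. by rewrite /qX tofracXn. Qed.

Lemma one_sub_qX_neq0 i : 1 - qX ^+ i.+1 != 0.
Proof.
rewrite qX_expE -tofrac1 -tofracB tofrac_eq0 subr_eq0.
by apply/eqP => /(congr1 (fun p : {poly rat} => size p)); rewrite size_polyXn size_poly1.
Qed.

Lemma one_add_qX_neq0 i : 1 + qX ^+ i != 0.
Proof.
rewrite qX_expE -tofrac1 -tofracD tofrac_eq0.
case: i => [|i]; first by rewrite expr0 -polyC1 -polyCD polyC_eq0.
by rewrite addrC -size_poly_eq0 size_polyDl ?size_polyXn ?size_poly1.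
Qed.

Theorem theorem1p1 (n d : nat) (hn : (1 <= n)%N) (hd : (d <= n - 1)%N) :
  (\sum_(0 <= k < n)
     qX ^+ k * qbinom qX (2 * k) (k + d) * qpoch (- qX ^+ k.+1) qX (n - 1 - k)
   =
   \sum_(0 <= k < (n - d).+1 | k == n - d %[mod 2])
     (-1) ^+ ((n - d - k) %/ 2)
     * qX ^ (((3 * ((n%:Z) ^+ 2 + (k%:Z) ^+ 2 - (d%:Z) ^+ 2)
               - 6 * (n%:Z) * (k%:Z)) %/ 4)%Z + n%:Z - k%:Z)
     * ((1 - qX ^+ k) * (1 + qX ^+ (n - k + 1)))
       / ((1 - qX ^+ (2 * n - k + 1)) * (1 + qX ^+ n))
     * qbinom qX (2 * n) k)
  /\
  (\sum_(0 <= k < n)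
     qX ^+ k * qbinom qX (2 * k) (k + d) * (qpoch (- qX ^+ k.+1) qX (n - 1 - k)) ^+ 2
   =
   \sum_(d.+1 <= k < n.+1) \sum_(k.+1 <= j < n.+2)
     qX ^ (((((j%:Z) ^+ 2 - 3 * (j%:Z) + (k%:Z) ^+ 2 - k%:Z) %/ 2)%Z
             - (d%:Z) ^+ 2 + 1))
     * (1 + qX ^+ (j - 1)) / (1 + qX ^+ n)
     * qbinom qX (2 * n) (n.+1 - j)).
Proof.
have le_dn : (d <= n)%N by lia.
have nz_n := one_add_qX_neq0 n.
have nz_dd : qX ^+ (d * d) != 0 := expf_neq0 _ qX_neq0.
split.
- (* [x ^+ 1] is convertible to [x]. *)
  rewrite -[LHS]/(qsum qX 1 d n) (alt_sum_closed one_sub_qX_neq0 one_add_qX_neq0 le_dn hn).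
  by rewrite -(qsum1_alt_sum one_sub_qX_neq0) mulrC (mulKf nz_n).
- rewrite -[LHS]/(qsum qX 2 d n) (double_sum_closed one_add_qX_neq0 qX_neq0).
  by rewrite -(qsum2_double_sum one_sub_qX_neq0) mulrA mulrC (mulKf (mulf_neq0 nz_dd nz_n)).
Qed.
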